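(* Let $\mathcal D$ be an ordered, oriented Descartes configuration and consider the orbit $\mathcal A^\perp(\mathcal D)=\{\mathcal D':\mathbf W_{\mathcal D'}=\mathbf U\mathbf W_{\mathcal D},\ \mathbf U\in\mathcal A^\perp\}$. Let $\mathcal P^\perp_{\mathcal D}$ be the set of all circles (as unoriented point sets in $\hat{\mathbb C}$) occurring in configurations of this orbit. Then no two circles of $\mathcal P^\perp_{\mathcal D}$ cross: any two circles in $\mathcal P^\perp_{\mathcal D}$ either coincide, or are tangent (meet in exactly one point), or are disjoint.
   Context: Oriented circles/lines and oriented Descartes configurations: four mutually tangent oriented circles/lines with six distinct tangency points whose interiors are pairwise disjoint or become so after reversing all orientations (interior of a positively curved circle is the open disk, of a negatively curved one the open exterior, of a line the half-plane its unit normal points into). Augmented curvature-center coordinates: for center $\mathbf c$, oriented radius $r$: $\mathbf w(C)=((|\mathbf c|^2-r^2)/r,1/r,c_1/r,c_2/r)$; for the line $\mathbf x\cdot\mathbf h=m$ with interior-pointing unit normal $\mathbf h$: $(2m,0,h_1,h_2)$; $\mathbf W_{\mathcal D}$ has rows $\mathbf w(C_k)$. Known fact: $\mathcal D\mapsto\mathbf W_{\mathcal D}$ is a bijection onto $\{\mathbf W:\mathbf W^T\mathbf Q_D\mathbf W=\mathbf Q_W\}$ with $\mathbf Q_D=\mathbf I-\frac12\mathbf 1\mathbf 1^T$, $\mathbf Q_W=\begin{pmatrix}0&-4&0&0\\-4&0&0&0\\0&0&2&0\\0&0&0&2\end{pmatrix}$. The dual Apollonian group is $\mathcal A^\perp=\langle\mathbf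 S_1^\perp,\dots,\mathbf S_4^\perp\rangle$, where $\mathbf S_i^\perp$ agrees with the $4\times 4$ identity except in column $i$, which has $-1$ in position $i$ and $2$ in the other three positions (e.g. $\mathbf S_1^\perp$ has first column $(-1,2,2,2)^T$); these matrices preserve $\mathbf Q_D$. *)

From HB Require Import structures.
From mathcomp Require Import all_boot all_order all_algebra.
From mathcomp Require Import reals.
Set Implicit Arguments. Unset Strict Implicit. Unset Printing Implicit Defensive.
Import Order.TTheory GRing.Theory Num.Theory.
Local Open Scope ring_scope.

Section Defs.
Variable R : realType.

(* Oriented circle with center (c1,c2) and oriented (signed) radius r,
   or oriented line  x . h = m  with unit normal h pointing into the interior. *)
Inductive ocircle : Type :=
| OCirc (c1 c2 r : R)
| OLine (h1 h2 m : R).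

Definition valid_ocircle (C : ocircle) : Prop :=
  match C with
  | OCirc _ _ r => r != 0
  | OLine h1 h2 _ => h1 ^+ 2 + h2 ^+ 2 = 1
  end.

(* Points of the extended plane \hat C : None is the point at infinity. *)
Definition xpoint := option (R * R)%type.

Definition on_circle (C : ocircle) (p : xpoint) : Prop :=
  match C, p with
  | OCirc c1 c2 r, Some (x1, x2) => (x1 - c1) ^+ 2 + (x2 - c2) ^+ 2 = r ^+ 2
  | OCirc _ _ _, None => False
  | OLine h1 h2 m, Some (x1, x2) => x1 * h1 + x2 * h2 = m
  | OLine _ _ _, None => True
  end.

Definition interior (C : ocircle) (x : R * R) : Prop :=
  match C with
  | OCirc c1 c2 r =>
      if 0 < r then (x.1 - c1) ^+ 2 + (x.2 - c2) ^+ 2 < r ^+ 2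
      else r ^+ 2 < (x.1 - c1) ^+ 2 + (x.2 - c2) ^+ 2
  | OLine h1 h2 m => m < x.1 * h1 + x.2 * h2
  end.

Definition reverse (C : ocircle) : ocircle :=
  match C with
  | OCirc c1 c2 r => OCirc c1 c2 (- r)
  | OLine h1 h2 m => OLine (- h1) (- h2) (- m)
  end.

Definition tangent_at (C D : ocircle) (p : xpoint) : Prop :=
  on_circle C p /\ on_circle D p /\
  forall q, on_circle C q -> on_circle D q -> q = p.

Definition interiors_disjoint (D : 'I_4 -> ocircle) : Prop :=
  forall i j : 'I_4, i != j -> forall x, ~ (interior (D i) x /\ interior (D j) x).

Definition descartes (D : 'I_4 -> ocircle) : Prop :=
  (forall i, valid_ocircle (D i)) /\
  (exists tp : 'I_4 -> 'I_4 -> xpoint,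
     (forall i j : 'I_4, i != j -> tangent_at (D i) (D j) (tp i j)) /\
     (forall i j k l : 'I_4, (i < j)%N -> (k < l)%N -> (i, j) != (k, l) ->
        tp i j <> tp k l)) /\
  (interiors_disjoint D \/ interiors_disjoint (fun i => reverse (D i))).

Definition wseq (C : ocircle) : seq R :=
  match C with
  | OCirc c1 c2 r => [:: (c1 ^+ 2 + c2 ^+ 2 - r ^+ 2) / r; r^-1; c1 / r; c2 / r]
  | OLine h1 h2 m => [:: 2 * m; 0; h1; h2]
  end.

Definition Wmat (D : 'I_4 -> ocircle) : 'M[R]_4 :=
  \matrix_(k < 4, j < 4) nth 0 (wseq (D k)) j.

Definition Sperp (i : 'I_4) : 'M[R]_4 :=
  \matrix_(a < 4, b < 4)
    if b == i then (if a == i then -1 else 2) else (a == b)%:R.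

Inductive in_Aperp : 'M[R]_4 -> Prop :=
| Aperp_one : in_Aperp 1%:M
| Aperp_gen i : in_Aperp (Sperp i)
| Aperp_mul U V : in_Aperp U -> in_Aperp V -> in_Aperp (U *m V)
| Aperp_inv U : in_Aperp U -> in_Aperp (invmx U).

Definition in_orbit (D D' : 'I_4 -> ocircle) : Prop :=
  descartes D' /\ exists U, in_Aperp U /\ Wmat D' = U *m Wmat D.

Definition in_Pperp (D : 'I_4 -> ocircle) (C : ocircle) : Prop :=
  exists D', in_orbit D D' /\ exists i, D' i = C.

End Defs.

(* Under the bilinear form 2 Q_W^-1, the augmented curvature-center coordinates of
   two oriented circles pair to their inversive product k.  Circles that cross have
   k^2 < 1, while k^2 >= 1 forces them to coincide, to touch or to be disjoint.  In a
   Descartes configuration the circles are pairwise tangent with disjoint interiors,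
   which forces k = -1, hence W_D (2 Q_W^-1) W_D^T = 2I - J.  Every element of the
   dual Apollonian group is an integer matrix with odd row sums, so the inversive
   product of the i-th circle of U W_D and the j-th circle of V W_D is
   2 u.v - (sum u)(sum v), with u the i-th row of U and v the j-th row of V: an odd
   integer, whose square is at least 1. *)

From HB Require Import structures.
From mathcomp Require Import all_boot all_order all_algebra.
From mathcomp Require Import reals ring lra zify.
From Stdlib Require Import Classical.
Set Implicit Arguments. Unset Strict Implicit. Unset Printing Implicit Defensive.
Import Order.TTheory GRing.Theory Num.Theory.
Local Open Scope ring_scope.

Lemma sum_ord4 (T : nmodType) (F : 'I_4 -> T) :
  \sum_(i < 4) F i = F 0 + F 1 + F 2 + F 3.
Proof.
by rewrite !big_ord_recr big_ord0 /= add0r; congr (F _ + F _ + F _ + F _); apply: val_inj.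
Qed.

Lemma ord4P (P : 'I_4 -> Prop) : P 0 -> P 1 -> P 2 -> P 3 -> forall i, P i.
Proof.
move=> P0 P1 P2 P3 [[|[|[|[|i]]]] Hi] //.
- by rewrite (_ : Ordinal Hi = 0) //; apply: val_inj.
- by rewrite (_ : Ordinal Hi = 1) //; apply: val_inj.
- by rewrite (_ : Ordinal Hi = 2) //; apply: val_inj.
- by rewrite (_ : Ordinal Hi = 3) //; apply: val_inj.
Qed.

Lemma invmxM (R : comUnitRingType) n (A B : 'M[R]_n) :
  A \in unitmx -> B \in unitmx -> invmx (A *m B) = invmx B *m invmx A.
Proof.
move=> uA uB; have uAB : A *m B \in unitmx by rewrite unitmx_mul uA.
have e : A *m B *m (invmx B *m invmx A) = 1%:M.
  by rewrite mulmxA -(mulmxA A) mulmxV // mulmx1 mulmxV.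
by rewrite -[RHS](mulKmx uAB) e mulmx1.
Qed.

Lemma mulmx_trmx_congr (R : comPzRingType) m n p q
    (U : 'M[R]_(m, n)) (V : 'M[R]_(p, n)) (W : 'M[R]_(n, q)) (Q : 'M[R]_q) :
  U *m W *m Q *m (V *m W)^T = U *m (W *m Q *m W^T) *m V^T.
Proof. by rewrite trmx_mul !mulmxA. Qed.

(** * Integer matrices with odd row sums *)

Definition dgram (R : pzRingType) n : 'M[R]_n := 2%:M - const_mx 1.

Lemma mul_dgram_trmxE (R : comPzRingType) m n (U V : 'M[R]_(m, n)) k l :
  (U *m dgram R n *m V^T) k l =
  2 * \sum_j U k j * V l j - (\sum_j U k j) * (\sum_j V l j).
Proof.
rewrite /dgram mulmxBr mul_mx_scalar mulmxBl !mxE.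
congr (_ - _); rewrite mulr_sumr; apply: eq_bigr => j _.
  by rewrite !mxE mulrA.
by rewrite !mxE; congr (_ * _); apply: eq_bigr => i _; rewrite mxE mulr1.
Qed.

Definition odd_rows m n (A : 'M[int]_(m, n)) := forall k, (2 %| \sum_j A k j - 1)%Z.

Lemma odd_rows1 n : odd_rows (1%:M : 'M_n).
Proof.
move=> k; rewrite (bigD1 k) //= big1 => [|j /negPf jk]; last by rewrite mxE eq_sym jk.
by rewrite mxE eqxx addr0 subrr.
Qed.

Lemma odd_rowsM m n p (A : 'M[int]_(m, n)) (B : 'M[int]_(n, p)) :
  odd_rows A -> odd_rows B -> odd_rows (A *m B).
Proof.
move=> oA oB k.
have -> : \sum_j (A *m B) k j - 1 =
    \sum_i A k i * (\sum_j B i j - 1) + (\sum_i A k i - 1).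
  under eq_bigr do rewrite mxE.
  rewrite exchange_big /= addrA -big_split /=; congr (_ - 1); apply: eq_bigr => i _.
  by rewrite mulrBr mulr1 subrK mulr_sumr.
by rewrite rpredD // rpred_sum // => i _; apply: dvdz_mull.
Qed.

Lemma odd_rows_dgram_neq0 m n (A B : 'M[int]_(m, n)) k l :
  odd_rows A -> odd_rows B -> (A *m dgram int n *m B^T) k l != 0.
Proof.
move=> oA oB; rewrite mul_dgram_trmxE.
set sA := \sum_j A k j; set sB := \sum_j B l j.
have odd_prod : (2 %| sA * sB - 1)%Z.
  have -> : sA * sB - 1 = (sA - 1) * sB + (sB - 1) by ring.
  by apply: rpredD; [apply: dvdz_mulr; apply: oA|apply: oB].
apply: contraTneq odd_prod => /eqP; rewrite subr_eq0 => /eqP <-.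
by rewrite rpredDl ?rpredN // dvdz_mulr.
Qed.

Definition int_odd_rows (R : pzRingType) m n (U : 'M[R]_(m, n)) :=
  exists2 A : 'M[int]_(m, n), U = map_mx intr A & odd_rows A.

Lemma int_odd_rows1 (R : pzRingType) n : int_odd_rows (1%:M : 'M[R]_n).
Proof. by exists 1%:M; [rewrite map_mx1|apply: odd_rows1]. Qed.

Lemma int_odd_rowsM (R : pzRingType) m n p (U : 'M[R]_(m, n)) (V : 'M[R]_(n, p)) :
  int_odd_rows U -> int_odd_rows V -> int_odd_rows (U *m V).
Proof.
by move=> [A -> oA] [B -> oB]; exists (A *m B); [rewrite map_mxM|apply: odd_rowsM].
Qed.

Lemma int_odd_rows_dgram_sqr_ge1 (R : numDomainType) m n (U V : 'M[R]_(m, n)) k l :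
  int_odd_rows U -> int_odd_rows V -> 1 <= ((U *m dgram R n *m V^T) k l) ^+ 2.
Proof.
move=> [A -> oA] [B -> oB].
have -> : dgram R n = map_mx intr (dgram int n).
  by rewrite /dgram map_mxB map_scalar_mx map_const_mx /= rmorph1 rmorphMn.
rewrite map_trmx -!map_mxM mxE -rmorphXn ler1z.
have := odd_rows_dgram_neq0 k l oA oB.
move: (_ k l) => z; lia.
Qed.

Section LagrangeIdentity.
Variable R : realFieldType.
Implicit Types a b c k : R.

Lemma dot_cross_sqr (a1 a2 b1 b2 : R) :
  (a1 * b1 + a2 * b2) ^+ 2 + (a1 * b2 - a2 * b1) ^+ 2 =
  (a1 ^+ 2 + a2 ^+ 2) * (b1 ^+ 2 + b2 ^+ 2).
Proof. by ring. Qed.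

Lemma sqr_add_eq0 a b : a ^+ 2 + b ^+ 2 = 0 -> a = 0 /\ b = 0.
Proof. by move=> ab0; split; nra. Qed.

Lemma sqr_eq1_of_cross0 k a c : a != 0 ->
  (k * a) ^+ 2 + c ^+ 2 = a ^+ 2 -> c = 0 -> k ^+ 2 = 1.
Proof.
move=> a0 + c0; rewrite c0 expr0n addr0 exprMn => /(congr1 (fun t => t / a ^+ 2)).
by rewrite mulfK ?divff ?expf_neq0.
Qed.

Lemma sqr_eq1_of_ge1 k a c : a != 0 ->
  (k * a) ^+ 2 + c ^+ 2 = a ^+ 2 -> 1 <= k ^+ 2 -> k ^+ 2 = 1.
Proof.
move=> a0 E k1; have a2 : 0 < a ^+ 2 by rewrite exprn_even_gt0.
move: E; rewrite exprMn; nra.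
Qed.

End LagrangeIdentity.

Section OrientedCircles.
Variable R : realType.
Implicit Types C : ocircle R.

(** * The inversive product *)

Definition iform : 'M[R]_4 := \matrix_(a, b) nth 0 (nth [::]
  [:: [:: 0; - 2^-1; 0; 0]; [:: - 2^-1; 0; 0; 0]; [:: 0; 0; 1; 0]; [:: 0; 0; 0; 1]] a) b.

Definition iprod C C' : R :=
  let w := wseq C in let w' := wseq C' in
  - (w`_0 * w'`_1 + w`_1 * w'`_0) / 2 + w`_2 * w'`_2 + w`_3 * w'`_3.

Lemma Wmat_iform (D D' : 'I_4 -> ocircle R) k l :
  (Wmat D *m iform *m (Wmat D')^T) k l = iprod (D k) (D' l).
Proof. by rewrite !mxE sum_ord4 !mxE !sum_ord4 !mxE /= !modn_small // /iprod; ring. Qed.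

Lemma iprod_circles (c1 c2 r d1 d2 s : R) : r != 0 -> s != 0 ->
  iprod (OCirc c1 c2 r) (OCirc d1 d2 s) =
  (r ^+ 2 + s ^+ 2 - ((c1 - d1) ^+ 2 + (c2 - d2) ^+ 2)) / (2 * r * s).
Proof. by move=> r0 s0; rewrite /iprod /=; field; rewrite r0 s0. Qed.

Lemma iprod_circle_line (c1 c2 r h1 h2 m : R) : r != 0 ->
  iprod (OCirc c1 c2 r) (OLine h1 h2 m) = (c1 * h1 + c2 * h2 - m) / r.
Proof. by move=> r0; rewrite /iprod /=; field. Qed.

Lemma iprod_lines (h1 h2 m g1 g2 n : R) :
  iprod (OLine h1 h2 m) (OLine g1 g2 n) = h1 * g1 + h2 * g2.
Proof. by rewrite /iprod /=; ring. Qed.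

Lemma iprodC C C' : iprod C C' = iprod C' C.
Proof. by rewrite /iprod; ring. Qed.

Lemma iprod_reverse C C' : iprod (reverse C) (reverse C') = iprod C C'.
Proof. by case: C => ? ? ?; case: C' => ? ? ?; rewrite /iprod /= ?invrN; ring. Qed.

Lemma iprodxx C : valid_ocircle C -> iprod C C = 1.
Proof.
case: C => [c1 c2 r|h1 h2 m] /= vC; last by rewrite iprod_lines -!expr2.
by rewrite iprod_circles // !subrr expr0n /= addr0 subr0; field; rewrite vC.
Qed.

(** * Tangency and interiors *)

Lemma circles_meet_dot (c1 c2 r d1 d2 s x1 x2 : R) : r != 0 -> s != 0 ->
  on_circle (OCirc c1 c2 r) (Some (x1, x2)) -> on_circle (OCirc d1 d2 s) (Some (x1, x2)) ->
  iprod (OCirc c1 c2 r) (OCirc d1 d2 s) * r * s =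
  (x1 - c1) * (x1 - d1) + (x2 - c2) * (x2 - d2).
Proof.
by move=> r0 s0 /= Hc Hd; rewrite iprod_circles // -{1}Hc -{1}Hd; field; rewrite r0 s0.
Qed.

Lemma circle_line_meet_dot (c1 c2 r h1 h2 x1 x2 : R) m : r != 0 ->
  on_circle (OLine h1 h2 m) (Some (x1, x2)) ->
  iprod (OCirc c1 c2 r) (OLine h1 h2 m) * r = - ((x1 - c1) * h1 + (x2 - c2) * h2).
Proof. by move=> r0 /= Hh; rewrite iprod_circle_line // divfK // -Hh; ring. Qed.

Lemma tangent_circles_iprod (c1 c2 r d1 d2 s : R) p : r != 0 -> s != 0 ->
  tangent_at (OCirc c1 c2 r) (OCirc d1 d2 s) p ->
  iprod (OCirc c1 c2 r) (OCirc d1 d2 s) ^+ 2 = 1.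
Proof.
case: p => [[x1 x2]|] r0 s0 [Hc [Hd uniq]] //.
apply: (sqr_eq1_of_cross0 (a := r * s)
  (c := (x1 - c1) * (x2 - d2) - (x2 - c2) * (x1 - d1))).
- exact: mulf_neq0.
- rewrite mulrA (circles_meet_dot r0 s0 Hc Hd) dot_cross_sqr.
  by move: Hc Hd => /= -> ->; rewrite exprMn.
have [[-> ->]|cd] := eqVneq (c1, c2) (d1, d2); first by ring.
set e1 := d1 - c1; set e2 := d2 - c2; set u1 := x1 - c1; set u2 := x2 - c2.
have E0 : e1 ^+ 2 + e2 ^+ 2 != 0.
  apply: contraNneq cd => /sqr_add_eq0 [/eqP + /eqP].
  by rewrite !subr_eq0 => /eqP -> /eqP ->.
pose t := (u1 * e1 + u2 * e2) / (e1 ^+ 2 + e2 ^+ 2).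
(* the mirror image of the common point in the line of centers is again a common point *)
have [x1E x2E] : Some (c1 + 2 * t * e1 - u1, c2 + 2 * t * e2 - u2) = Some (x1, x2).
  apply: uniq; rewrite /=.
    by rewrite -Hc /t /u1 /u2; field.
  by rewrite -Hd /t /e1 /e2 /u1 /u2; field.
have u1E : u1 = t * e1 by move: x1E; rewrite /u1; lra.
have u2E : u2 = t * e2 by move: x2E; rewrite /u2; lra.
have -> : x1 - d1 = u1 - e1 by rewrite /u1 /e1; ring.
have -> : x2 - d2 = u2 - e2 by rewrite /u2 /e2; ring.
by rewrite u1E u2E; ring.
Qed.

Lemma tangent_circle_line_iprod (c1 c2 r h1 h2 m : R) p : r != 0 ->
  valid_ocircle (OLine h1 h2 m) -> tangent_at (OCirc c1 c2 r) (OLine h1 h2 m) p ->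
  iprod (OCirc c1 c2 r) (OLine h1 h2 m) ^+ 2 = 1.
Proof.
case: p => [[x1 x2]|] r0 /= hh [Hc [Hh uniq]] //.
set cross := (x1 - c1) * h2 - (x2 - c2) * h1.
apply: (sqr_eq1_of_cross0 (a := r) (c := cross)) => //.
  rewrite (circle_line_meet_dot _ _ r0 Hh) sqrrN dot_cross_sqr.
  by move: Hc => /= ->; rewrite hh mulr1.
(* the mirror image of the common point in the perpendicular through the center *)
have [x1E x2E] : Some (x1 - 2 * cross * h2, x2 + 2 * cross * h1) = Some (x1, x2).
  apply: uniq; rewrite /=.
    rewrite -Hc; transitivity ((x1 - c1) ^+ 2 + (x2 - c2) ^+ 2 +
      4 * cross ^+ 2 * (h1 ^+ 2 + h2 ^+ 2 - 1)); first by rewrite /cross; ring.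
    by rewrite hh subrr mulr0 addr0.
  by rewrite -Hh; ring.
have [ch1 ch2] : cross * h1 = 0 /\ cross * h2 = 0 by split; lra.
by rewrite -[cross]mulr1 -hh mulrDr !expr2 !mulrA ch1 ch2 !mul0r addr0.
Qed.

Lemma tangent_lines_iprod (h1 h2 m g1 g2 n : R) p :
  valid_ocircle (OLine h1 h2 m) -> valid_ocircle (OLine g1 g2 n) ->
  tangent_at (OLine h1 h2 m) (OLine g1 g2 n) p ->
  iprod (OLine h1 h2 m) (OLine g1 g2 n) ^+ 2 = 1.
Proof.
move=> /= hh gg [_ [_ uniq]].
apply: (sqr_eq1_of_cross0 (a := 1) (c := h1 * g2 - h2 * g1)).
- exact: oner_neq0.
- by rewrite mulr1 iprod_lines dot_cross_sqr hh gg mulr1 expr1n.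
have pN : None = p by apply: uniq.
apply/eqP; apply: contraT => det0.
(* Cramer's rule *)
pose x : xpoint R := Some ((m * g2 - n * h2) / (h1 * g2 - h2 * g1),
                            (h1 * n - g1 * m) / (h1 * g2 - h2 * g1)).
suff : x = None by [].
by rewrite pN; apply: uniq; rewrite /=; field.
Qed.

Lemma tangent_atC C C' p : tangent_at C C' p -> tangent_at C' C p.
Proof. by case=> [HC [HC' uniq]]; split=> //; split=> // q Hq Hq'; apply: uniq. Qed.

Lemma tangent_iprod C C' p :
  valid_ocircle C -> valid_ocircle C' -> tangent_at C C' p -> iprod C C' ^+ 2 = 1.
Proof.
case: C => [c1 c2 r|h1 h2 m]; case: C' => [d1 d2 s|g1 g2 n] vC vC'.
- exact: tangent_circles_iprod.
- exact: tangent_circle_line_iprod.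
- by move/tangent_atC; rewrite iprodC; apply: tangent_circle_line_iprod.
- exact: tangent_lines_iprod.
Qed.

Lemma exteriors_meet (c1 c2 r d1 d2 s : R) : exists x : R * R,
  r ^+ 2 < (x.1 - c1) ^+ 2 + (x.2 - c2) ^+ 2 /\ s ^+ 2 < (x.1 - d1) ^+ 2 + (x.2 - d2) ^+ 2.
Proof.
pose M := `|r| + `|s| + `|c1 - d1| + 1.
exists (c1 + M, c2) => /=; rewrite -(real_normK (num_real r)) -(real_normK (num_real s)).
have Mr : `|r| < M by rewrite /M; have := normr_ge0 s; have := normr_ge0 (c1 - d1); lra.
have Ms : `|s| < c1 + M - d1.
  by rewrite /M; have := normr_ge0 r; have := ler_norm (d1 - c1); rewrite distrC; lra.
have := sqr_ge0 (c2 - d2); have := normr_ge0 r; have := normr_ge0 s.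
split; nra.
Qed.

Lemma circles_iprod1_interiors_meet (c1 c2 r d1 d2 s : R) : r != 0 -> s != 0 ->
  iprod (OCirc c1 c2 r) (OCirc d1 d2 s) = 1 ->
  exists x, interior (OCirc c1 c2 r) x /\ interior (OCirc d1 d2 s) x.
Proof.
wlog sr : c1 c2 r d1 d2 s / s <= r.
  move=> W r0 s0 k1; have [sr|rs] := lerP s r; first exact: W.
  have := W d1 d2 s c1 c2 r (ltW rs) s0 r0; rewrite iprodC => /(_ k1) [x [? ?]].
  by exists x.
move=> r0 s0; have rs0 : 2 * r * s != 0 by rewrite !mulf_neq0 ?pnatr_eq0.
rewrite iprod_circles // => /(canRL (divfK rs0)); rewrite mul1r => k1.
have dist : (c1 - d1) ^+ 2 + (c2 - d2) ^+ 2 = (r - s) ^+ 2 by lra.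
have [s_gt0|s_le0] := ltrP 0 s.
  exists (d1, d2); rewrite /= (lt_le_trans s_gt0 sr) s_gt0 !subrr expr0n /= addr0.
  split; last by rewrite exprn_even_gt0.
  by rewrite -!(sqrrN (_ - _)) !opprB dist; nra.
have s_lt0 : s < 0 by rewrite lt_neqAle s0 s_le0.
have [r_gt0|r_le0] := ltrP 0 r.
  exists (c1, c2); rewrite /= r_gt0 (le_gtF s_le0) !subrr expr0n /= addr0 dist.
  by split; [rewrite exprn_even_gt0|nra].
have [x [xr xs]] := exteriors_meet c1 c2 r d1 d2 s.
by exists x; rewrite /= (le_gtF r_le0) (le_gtF s_le0).
Qed.

Lemma circle_line_iprod1_interiors_meet (c1 c2 r h1 h2 m : R) : r != 0 ->
  valid_ocircle (OLine h1 h2 m) -> iprod (OCirc c1 c2 r) (OLine h1 h2 m) = 1 ->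
  exists x, interior (OCirc c1 c2 r) x /\ interior (OLine h1 h2 m) x.
Proof.
move=> r0 /= hh; rewrite iprod_circle_line // => /(canRL (divfK r0)); rewrite mul1r => chr.
have [r_gt0|r_le0] := ltrP 0 r.
  exists (c1, c2); rewrite /= !subrr expr0n /= addr0.
  by split; [rewrite exprn_even_gt0|lra].
have r_lt0 : r < 0 by rewrite lt_neqAle r0 r_le0.
exists (c1 + (1 - r) * h1, c2 + (1 - r) * h2); split => /=.
  by rewrite !(addrC c1) !(addrC c2) !addrK !exprMn -mulrDr hh mulr1; nra.
have -> : (c1 + (1 - r) * h1) * h1 + (c2 + (1 - r) * h2) * h2 =
  c1 * h1 + c2 * h2 + (1 - r) * (h1 ^+ 2 + h2 ^+ 2) by ring.
by rewrite hh; lra.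
Qed.

Lemma lines_iprod1_interiors_meet (h1 h2 m g1 g2 n : R) :
  valid_ocircle (OLine h1 h2 m) -> iprod (OLine h1 h2 m) (OLine g1 g2 n) = 1 ->
  exists x, interior (OLine h1 h2 m) x /\ interior (OLine g1 g2 n) x.
Proof.
rewrite iprod_lines /= => hh hg; pose t := `|m| + `|n| + 1.
exists (t * h1, t * h2); rewrite /= -!mulrA -!mulrDr -!expr2 hh hg mulr1.
have := ler_norm m; have := ler_norm n; have := normr_ge0 m; have := normr_ge0 n.
by rewrite /t; split; lra.
Qed.

Lemma iprod1_interiors_meet C C' :
  valid_ocircle C -> valid_ocircle C' -> iprod C C' = 1 ->
  exists x, interior C x /\ interior C' x.
Proof.
case: C => [c1 c2 r|h1 h2 m]; case: C' => [d1 d2 s|g1 g2 n] vC vC'.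
- exact: circles_iprod1_interiors_meet.
- exact: circle_line_iprod1_interiors_meet.
- rewrite iprodC => /(circle_line_iprod1_interiors_meet vC' vC) [x [? ?]].
  by exists x.
- exact: lines_iprod1_interiors_meet.
Qed.

Lemma tangent_disjoint_iprod C C' p :
  valid_ocircle C -> valid_ocircle C' -> tangent_at C C' p ->
  (forall x, ~ (interior C x /\ interior C' x)) -> iprod C C' = -1.
Proof.
move=> vC vC' /(tangent_iprod vC vC') /eqP.
rewrite sqrf_eq1 => /orP[/eqP k1 disj|/eqP //].
by have [x Hx] := iprod1_interiors_meet vC vC' k1; case: (disj x Hx).
Qed.

(** * Non-crossing circles *)

Definition noncrossing C C' :=
  (forall p, on_circle C p <-> on_circle C' p) \/
  (exists p, tangent_at C C' p) \/
  (forall p, ~ (on_circle C p /\ on_circle C' p)).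

Lemma noncrossingC C C' : noncrossing C C' -> noncrossing C' C.
Proof.
case=> [same|[[p tCC']|disj]]; [left=> p; by rewrite same|right; left|right; right].
- by exists p; apply: tangent_atC.
- by move=> p [? ?]; apply: (disj p).
Qed.

Lemma noncrossing_of_meet C C' :
  (forall p, on_circle C p -> on_circle C' p -> noncrossing C C') -> noncrossing C C'.
Proof.
move=> meet.
have [[p [Cp C'p]]|nomeet] := classic (exists p, on_circle C p /\ on_circle C' p).
  exact: meet Cp C'p.
by right; right => p Cp; apply: nomeet; exists p.
Qed.

Lemma tangent_at_Some C C' x : on_circle C (Some x) -> on_circle C' (Some x) ->
  ~ on_circle C None -> (forall y, on_circle C (Some y) -> on_circle C' (Some y) -> y = x) ->
  tangent_at C C' (Some x).
Proof.
by move=> Cx C'x CN uniq; do 2!split=> //; case=> [y Cy C'y|//]; rewrite (uniq y).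
Qed.

Lemma circles_iprod_sqr_ge1 (c1 c2 r d1 d2 s x1 x2 : R) : r != 0 -> s != 0 ->
  on_circle (OCirc c1 c2 r) (Some (x1, x2)) -> on_circle (OCirc d1 d2 s) (Some (x1, x2)) ->
  1 <= iprod (OCirc c1 c2 r) (OCirc d1 d2 s) ^+ 2 ->
  iprod (OCirc c1 c2 r) (OCirc d1 d2 s) ^+ 2 = 1.
Proof.
move=> r0 s0 Hc Hd; apply: (sqr_eq1_of_ge1 (a := r * s)
  (c := (x1 - c1) * (x2 - d2) - (x2 - c2) * (x1 - d1))); first exact: mulf_neq0.
rewrite mulrA (circles_meet_dot r0 s0 Hc Hd) dot_cross_sqr.
by move: Hc Hd => /= -> ->; rewrite exprMn.
Qed.

Lemma circles_common_point (c1 c2 r d1 d2 s y1 y2 : R) : r != 0 -> s != 0 ->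
  iprod (OCirc c1 c2 r) (OCirc d1 d2 s) ^+ 2 = 1 ->
  on_circle (OCirc c1 c2 r) (Some (y1, y2)) -> on_circle (OCirc d1 d2 s) (Some (y1, y2)) ->
  let k := iprod (OCirc c1 c2 r) (OCirc d1 d2 s) in
  s * (y1 - c1) = k * r * (y1 - d1) /\ s * (y2 - c2) = k * r * (y2 - d2).
Proof.
move=> r0 s0 k2 Hc Hd k.
have dot := circles_meet_dot r0 s0 Hc Hd; rewrite -/k in k2 dot.
have : (s * (y1 - c1) - k * r * (y1 - d1)) ^+ 2 +
       (s * (y2 - c2) - k * r * (y2 - d2)) ^+ 2 = 0.
  transitivity (s ^+ 2 * ((y1 - c1) ^+ 2 + (y2 - c2) ^+ 2)
    - 2 * (k * r * s) * ((y1 - c1) * (y1 - d1) + (y2 - c2) * (y2 - d2))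
    + k ^+ 2 * r ^+ 2 * ((y1 - d1) ^+ 2 + (y2 - d2) ^+ 2)); first by ring.
  move: Hc Hd => /= -> ->; rewrite -dot.
  by transitivity (r ^+ 2 * s ^+ 2 * (1 - k ^+ 2)); [ring|rewrite k2 subrr mulr0].
by move=> /sqr_add_eq0 [e1 e2]; split; apply/eqP; rewrite -subr_eq0; apply/eqP.
Qed.

Lemma circles_noncrossing (c1 c2 r d1 d2 s : R) : r != 0 -> s != 0 ->
  1 <= iprod (OCirc c1 c2 r) (OCirc d1 d2 s) ^+ 2 ->
  noncrossing (OCirc c1 c2 r) (OCirc d1 d2 s).
Proof.
move=> r0 s0 k_ge1; apply: noncrossing_of_meet => -[[x1 x2]|//] Hc Hd.
have k2 := circles_iprod_sqr_ge1 r0 s0 Hc Hd k_ge1.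
have [xc1 xc2] := circles_common_point r0 s0 k2 Hc Hd.
set k := iprod _ _ in k2 xc1 xc2.
have [skr|skr] := eqVneq s (k * r).
  rewrite -skr in xc1 xc2.
  have [-> ->] : c1 = d1 /\ c2 = d2.
    by split; apply: (mulfI s0); lra.
  have s2 : s ^+ 2 = r ^+ 2 by rewrite skr exprMn k2 mul1r.
  by left; case=> [[y1 y2]|] //=; rewrite s2.
right; left; exists (Some (x1, x2)); apply: tangent_at_Some => // -[y1 y2] Hc' Hd'.
have [yc1 yc2] := circles_common_point r0 s0 k2 Hc' Hd'.
rewrite -/k in yc1 yc2; have skr0 : s - k * r != 0 by rewrite subr_eq0.
by congr (_, _); apply: (mulfI skr0); lra.
Qed.

Lemma circle_line_iprod_sqr_ge1 (c1 c2 r h1 h2 m x1 x2 : R) : r != 0 ->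
  valid_ocircle (OLine h1 h2 m) ->
  on_circle (OCirc c1 c2 r) (Some (x1, x2)) -> on_circle (OLine h1 h2 m) (Some (x1, x2)) ->
  1 <= iprod (OCirc c1 c2 r) (OLine h1 h2 m) ^+ 2 ->
  iprod (OCirc c1 c2 r) (OLine h1 h2 m) ^+ 2 = 1.
Proof.
move=> r0 /= hh Hc Hh; apply: (sqr_eq1_of_ge1 (a := r)
  (c := (x1 - c1) * h2 - (x2 - c2) * h1)) => //.
rewrite (circle_line_meet_dot _ _ r0 Hh) sqrrN dot_cross_sqr.
by move: Hc => /= ->; rewrite hh mulr1.
Qed.

Lemma circle_line_common_point (c1 c2 r h1 h2 m y1 y2 : R) : r != 0 ->
  valid_ocircle (OLine h1 h2 m) -> iprod (OCirc c1 c2 r) (OLine h1 h2 m) ^+ 2 = 1 ->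
  on_circle (OCirc c1 c2 r) (Some (y1, y2)) -> on_circle (OLine h1 h2 m) (Some (y1, y2)) ->
  let k := iprod (OCirc c1 c2 r) (OLine h1 h2 m) in
  y1 - c1 = - (k * r) * h1 /\ y2 - c2 = - (k * r) * h2.
Proof.
move=> r0 + k2 Hc Hh k => /= hh.
have dot := circle_line_meet_dot c1 c2 r0 Hh; rewrite -/k in k2 dot.
have : (y1 - c1 + k * r * h1) ^+ 2 + (y2 - c2 + k * r * h2) ^+ 2 = 0.
  transitivity (((y1 - c1) ^+ 2 + (y2 - c2) ^+ 2)
    - 2 * (k * r) * (- ((y1 - c1) * h1 + (y2 - c2) * h2))
    + (k * r) ^+ 2 * (h1 ^+ 2 + h2 ^+ 2)); first by ring.
  move: Hc => /= ->; rewrite -dot hh mulr1.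
  by transitivity (r ^+ 2 * (1 - k ^+ 2)); [ring|rewrite k2 subrr mulr0].
by move=> /sqr_add_eq0 [e1 e2]; rewrite -/k; split; lra.
Qed.

Lemma circle_line_noncrossing (c1 c2 r h1 h2 m : R) : r != 0 ->
  valid_ocircle (OLine h1 h2 m) -> 1 <= iprod (OCirc c1 c2 r) (OLine h1 h2 m) ^+ 2 ->
  noncrossing (OCirc c1 c2 r) (OLine h1 h2 m).
Proof.
move=> r0 hh k_ge1; apply: noncrossing_of_meet => -[[x1 x2]|//] Hc Hh.
have k2 := circle_line_iprod_sqr_ge1 r0 hh Hc Hh k_ge1.
have [xc1 xc2] := circle_line_common_point r0 hh k2 Hc Hh.
right; left; exists (Some (x1, x2)); apply: tangent_at_Some => // -[y1 y2] Hc' Hh'.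
have [yc1 yc2] := circle_line_common_point r0 hh k2 Hc' Hh'.
by congr (_, _); lra.
Qed.

Lemma lines_noncrossing (h1 h2 m g1 g2 n : R) :
  valid_ocircle (OLine h1 h2 m) -> valid_ocircle (OLine g1 g2 n) ->
  1 <= iprod (OLine h1 h2 m) (OLine g1 g2 n) ^+ 2 ->
  noncrossing (OLine h1 h2 m) (OLine g1 g2 n).
Proof.
rewrite iprod_lines /= => hh gg; set k := h1 * g1 + h2 * g2 => k_ge1.
have k2 : k ^+ 2 = 1.
  apply: (sqr_eq1_of_ge1 (a := 1) (c := h1 * g2 - h2 * g1)) => //; first exact: oner_neq0.
  by rewrite mulr1 dot_cross_sqr hh gg mulr1 expr1n.
have [g1E g2E] : g1 = k * h1 /\ g2 = k * h2.
  suff /sqr_add_eq0 [] : (g1 - k * h1) ^+ 2 + (g2 - k * h2) ^+ 2 = 0 by split; lra.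
  transitivity ((g1 ^+ 2 + g2 ^+ 2) - 2 * k ^+ 2 + k ^+ 2 * (h1 ^+ 2 + h2 ^+ 2)).
    by rewrite /k; ring.
  by rewrite gg hh k2; ring.
have [[y1 [y2 [Hh Hg]]]|parallel] :=
  classic (exists y1 y2, y1 * h1 + y2 * h2 = m /\ y1 * g1 + y2 * g2 = n).
  have nE : n = k * m by rewrite -Hg -Hh g1E g2E; ring.
  left; case=> [[z1 z2]|] //=; rewrite g1E g2E nE.
  have -> : z1 * (k * h1) + z2 * (k * h2) = k * (z1 * h1 + z2 * h2) by ring.
  have k0 : k != 0 by rewrite -sqrf_eq0 k2 oner_eq0.
  by split=> [->|]; last apply: mulfI.
right; left; exists None; do 2!split=> //.
by case=> [[z1 z2] Hh Hg|//]; case: parallel; exists z1, z2.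
Qed.

Lemma iprod_sqr_ge1_noncrossing C C' :
  valid_ocircle C -> valid_ocircle C' -> 1 <= iprod C C' ^+ 2 -> noncrossing C C'.
Proof.
case: C => [c1 c2 r|h1 h2 m]; case: C' => [d1 d2 s|g1 g2 n] vC vC'.
- exact: circles_noncrossing.
- exact: circle_line_noncrossing.
- by rewrite iprodC => /(circle_line_noncrossing vC' vC) /noncrossingC.
- exact: lines_noncrossing.
Qed.

(** * Descartes configurations and the dual Apollonian group *)

Lemma on_circle_reverse C p : on_circle (reverse C) p <-> on_circle C p.
Proof.
case: C => [c1 c2 r|h1 h2 m]; case: p => [[x1 x2]|] //=; first by rewrite sqrrN.
by rewrite !mulrN -opprD; split => [/oppr_inj|->].
Qed.

Lemma valid_reverse C : valid_ocircle C -> valid_ocircle (reverse C).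
Proof. by case: C => [c1 c2 r|h1 h2 m] /=; [rewrite oppr_eq0|rewrite !sqrrN]. Qed.

Lemma tangent_at_reverse C C' p :
  tangent_at C C' p -> tangent_at (reverse C) (reverse C') p.
Proof.
case=> [Cp [C'p uniq]]; split; first exact/on_circle_reverse.
split=> [|q]; first exact/on_circle_reverse.
by move=> /on_circle_reverse Cq /on_circle_reverse C'q; apply: uniq.
Qed.

Lemma descartes_iprod (D : 'I_4 -> ocircle R) i j : descartes D ->
  iprod (D i) (D j) = if i == j then 1 else -1.
Proof.
case=> [vD [[tp [tD _]] disj]]; have [<-|ij] := eqVneq i j; first exact: iprodxx.
have [dD|dDrev] := disj.
  exact: tangent_disjoint_iprod (vD i) (vD j) (tD i j ij) (dD i j ij).
rewrite -iprod_reverse.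
exact: tangent_disjoint_iprod (valid_reverse (vD i)) (valid_reverse (vD j))
  (tangent_at_reverse (tD i j ij)) (dDrev i j ij).
Qed.

Lemma descartes_gram (D : 'I_4 -> ocircle R) : descartes D ->
  Wmat D *m iform *m (Wmat D)^T = dgram R 4.
Proof.
move=> HD; apply/matrixP => i j; rewrite Wmat_iform descartes_iprod // !mxE.
by case: eqVneq => _ /=; rewrite ?mulr1n ?mulr0n; lra.
Qed.

Lemma int_odd_rows_Sperp i : int_odd_rows (Sperp R i).
Proof.
exists (\matrix_(a, b) if b == i then (if a == i then -1 else 2) else (a == b)%:R).
  by apply/matrixP => a b; rewrite !mxE; case: (b == i); case: (a == i) => //=;
    rewrite ?rmorphN ?rmorph_nat.
by move: i; apply: ord4P => k; move: k; apply: ord4P; rewrite sum_ord4 !mxE.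
Qed.

Lemma SperpK i : Sperp R i *m Sperp R i = 1%:M.
Proof.
apply/matrixP => a b; rewrite !mxE sum_ord4 !mxE.
by move: i a b; apply: ord4P; apply: ord4P; apply: ord4P; rewrite /= ?mxE /=; ring.
Qed.

Lemma in_Aperp_int_odd_rows (U : 'M[R]_4) : in_Aperp U ->
  [/\ U \in unitmx, int_odd_rows U & int_odd_rows (invmx U)].
Proof.
elim=> {U} [|i|U V _ [uU oU oU'] _ [uV oV oV']|U _ [uU oU oU']].
- by rewrite unitmx1 invmx1; split=> //; apply: int_odd_rows1.
- have [uS _] := mulmx1_unit (SperpK i).
  have invS : invmx (Sperp R i) = Sperp R i.
    by rewrite -[RHS](mulKmx uS) SperpK mulmx1.
  by rewrite invS; split=> //; apply: int_odd_rows_Sperp.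
- by rewrite unitmx_mul uU uV invmxM //; split=> //; apply: int_odd_rowsM.
- by rewrite unitmx_inv invmxK.
Qed.

End OrientedCircles.

Theorem theorem5p1 (R : realType) (D : 'I_4 -> ocircle R) :
  descartes D ->
  forall C1 C2 : ocircle R, in_Pperp D C1 -> in_Pperp D C2 ->
    (forall p, on_circle C1 p <-> on_circle C2 p) \/
    (exists p, tangent_at C1 C2 p) \/
    (forall p, ~ (on_circle C1 p /\ on_circle C2 p)).
Proof.
move=> HD C1 C2 [D1 [[HD1 [U [HU W1]]] [k <-]]] [D2 [[HD2 [V [HV W2]]] [l <-]]].
apply: iprod_sqr_ge1_noncrossing; [exact: HD1.1|exact: HD2.1|].
have [_ oU _] := in_Aperp_int_odd_rows HU; have [_ oV _] := in_Aperp_int_odd_rows HV.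
rewrite -Wmat_iform W1 W2 mulmx_trmx_congr descartes_gram //.
exact: int_odd_rows_dgram_sqr_ge1.
Qed.
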